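(* There exists a symmetric fractional hedonic game that admits no individually stable partition.
   Context: A fractional hedonic game (FHG) on agents $N$ is given by utility functions $v_i:N\to\mathbb R$ with $v_i(i)=0$; agent $i$'s utility for a coalition $C\ni i$ is $\frac{1}{|C|}\sum_{j\in C}v_i(j)$, and $i$ prefers coalitions with higher utility. The FHG is symmetric if $v_i(j)=v_j(i)$ for all $i,j$. An IS deviation of agent $i$ from partition $\pi$ to $\pi'$ is a move of $i$ alone from $\pi(i)$ into another coalition of $\pi$ or into a new singleton such that $i$ strictly prefers $\pi'(i)$ to $\pi(i)$ and every $j\in\pi'(i)\setminus\{i\}$ weakly prefers $\pi'(j)$ to $\pi(j)$. A partition is individually stable (IS) if no IS deviation is possible from it. *)

From HB Require Import structures.
From mathcomp Require Import all_boot all_order all_algebra.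
From mathcomp Require Import reals.
Set Implicit Arguments. Unset Strict Implicit. Unset Printing Implicit Defensive.
Import Order.TTheory GRing.Theory Num.Theory.
Local Open Scope ring_scope.

Section FHG.
Variables (R : realType) (T : finType) (v : T -> T -> R).

Definition fhg_valid := forall i, v i i = 0.
Definition fhg_symmetric := forall i j, v i j = v j i.

Definition fhg_util (i : T) (C : {set T}) : R :=
  (\sum_(j in C) v i j) / (#|C|%:R).

(* the partition obtained from P when agent i leaves its coalition
   pblock P i and joins C (C \in P, or C = set0 for a new singleton) *)
Definition move_partition (P : {set {set T}}) (i : T) (C : {set T})
  : {set {set T}} :=
  ((P :\ pblock P i :\ C) :|: [set pblock P i :\ i; i |: C]) :\ set0.

Definition IS_deviation (P : {set {set T}}) (i : T) (C : {set T}) : Prop :=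
  let P' := move_partition P i C in
  ((C \in P /\ C != pblock P i) \/ C = set0) /\
  fhg_util i (pblock P i) < fhg_util i (pblock P' i) /\
  (forall j, j \in pblock P' i -> j != i ->
     fhg_util j (pblock P j) <= fhg_util j (pblock P' j)).

Definition individually_stable (P : {set {set T}}) : Prop :=
  partition P [set: T] /\ ~ (exists i C, IS_deviation P i C).

End FHG.

From mathcomp Require Import all_boot all_order all_algebra.
From mathcomp Require Import reals.
From Stdlib Require Import ZArith.
From mathcomp Require Import ssrZ zify.
Set Implicit Arguments. Unset Strict Implicit. Unset Printing Implicit Defensive.
Import Order.TTheory GRing.Theory Num.Theory.

(* Seven agents, positive weights on the eleven edges of a graph and weight -1000
   between non-adjacent agents.  Utilities are averages of integer weights, so
   whether a move is an IS deviation reduces to comparing integer weight sums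
   after clearing denominators.  A partition is determined by the sequence
   sending each agent to the least member of its coalition; running through the
   877 such sequences, a computation finds for each partition an IS deviation,
   either to a singleton or into another coalition. *)

Lemma pblock_unique (T : finType) (P : {set {set T}}) (B : {set T}) x :
  B \in P -> x \in B -> (forall D, D \in P -> x \in D -> D = B) -> pblock P x = B.
Proof.
move=> BP xB uniqB; rewrite /pblock; case: pickP => [D /andP[DP xD] | /(_ B)] /=.
  exact: uniqB.
by rewrite BP xB.
Qed.

Section Deviation.
Variables (R : realType) (T : finType) (v : T -> T -> R).
Variables (P : {set {set T}}) (i : T) (C : {set T}).
Hypothesis Ppart : partition P [set: T].
Hypothesis target : (C \in P /\ C != pblock P i) \/ C = set0.
Local Open Scope ring_scope.

Let trivP : trivIset P. Proof. by case/and3P: Ppart. Qed.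

Lemma pblock_move_partition x :
  x \in i |: C -> pblock (move_partition P i C) x = i |: C.
Proof.
move=> xiC; apply: pblock_unique => //.
  rewrite !inE eqxx !orbT andbT; apply/eqP => iC0.
  by have := setU11 i C; rewrite iC0 inE.
have BP : pblock P i \in P by rewrite pblock_mem ?(cover_partition Ppart) ?inE.
move=> D; rewrite !inE => /andP[_ /orP[/and3P[DC DB DP] | /orP[/eqP-> | /eqP-> //]]] xD.
- move: xiC; rewrite !inE => /orP[/eqP xi | xC].
    by move: DB; rewrite -(def_pblock trivP DP xD) xi eqxx.
  case: target => [[CP _] | C0]; last by move: xC; rewrite C0 inE.
  by move: DC; rewrite -(def_pblock trivP DP xD) (def_pblock trivP CP xC) eqxx.
- move: xD; rewrite !inE => /andP[xi xB]; move: xiC; rewrite !inE (negbTE xi) /= => xC.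
  case: target => [[CP CB] | C0]; last by move: xC; rewrite C0 inE.
  by move: CB; rewrite -(def_pblock trivP CP xC) (def_pblock trivP BP xB) eqxx.
Qed.

Lemma IS_deviation_intro :
  fhg_util v i (pblock P i) < fhg_util v i (i |: C) ->
  (forall j, j \in C -> fhg_util v j C <= fhg_util v j (i |: C)) ->
  IS_deviation v P i C.
Proof.
move=> gain accept; split=> //; rewrite pblock_move_partition ?setU11 //.
split=> // j jiC ji; have jC : j \in C by move: jiC; rewrite !inE (negbTE ji).
rewrite pblock_move_partition //; case: target => [[CP _] | C0]; last by move: jC; rewrite C0 inE.
by rewrite (def_pblock trivP CP jC); apply: accept.
Qed.

End Deviation.

Lemma int_of_Z_of_nat m : int_of_Z (Z.of_nat m) = m.
Proof. lia. Qed.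

Lemma int_of_Z_lt x y : (int_of_Z x < int_of_Z y)%R = (x <? y)%Z.
Proof. by apply/idP/Z.ltb_spec0; lia. Qed.

Lemma int_of_Z_le x y : (int_of_Z x <= int_of_Z y)%R = (x <=? y)%Z.
Proof. by apply/idP/Z.leb_spec0; lia. Qed.

Section ZFractions.
Variables (F : numFieldType) (a c : Z) (b d : nat).
Hypotheses (b_gt0 : (0 < b)%nat) (d_gt0 : (0 < d)%nat).
Local Open Scope ring_scope.

Lemma ltr_Z_frac : ((int_of_Z a)%:~R / b%:R < (int_of_Z c)%:~R / d%:R :> F) =
  (a * Z.of_nat d <? c * Z.of_nat b)%Z.
Proof.
rewrite ltr_pdivrMr ?ltr0n // mulrAC ltr_pdivlMr ?ltr0n // !pmulrn -!intrM ltr_int.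
by rewrite -int_of_Z_lt !rmorphM /= !int_of_Z_of_nat.
Qed.

Lemma ler_Z_frac : ((int_of_Z a)%:~R / b%:R <= (int_of_Z c)%:~R / d%:R :> F) =
  (a * Z.of_nat d <=? c * Z.of_nat b)%Z.
Proof.
rewrite ler_pdivrMr ?ltr0n // mulrAC ler_pdivlMr ?ltr0n // !pmulrn -!intrM ler_int.
by rewrite -int_of_Z_le !rmorphM /= !int_of_Z_of_nat.
Qed.

End ZFractions.

Section OrdinalSets.
Variable n : nat.

Definition ord_set (l : seq nat) : {set 'I_n} := [set j | val j \in l].

Lemma ord_set_cons (i : 'I_n) l : ord_set (val i :: l) = i |: ord_set l.
Proof. by apply/setP => j; rewrite !inE val_eqE. Qed.

Lemma big_ord_set (V : nmodType) (F : nat -> V) l :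
  uniq l -> all (fun k => k < n)%nat l -> (\sum_(j in ord_set l) F (val j) = \sum_(k <- l) F k)%R.
Proof.
elim: l => [|k l IH] /=; first by rewrite big_nil big_pred0 // => j; rewrite inE.
move=> /andP[kl ul] /andP[ltkn bl].
by rewrite -[k]/(val (Ordinal ltkn)) ord_set_cons big_setU1 ?big_cons ?IH // inE.
Qed.

Lemma card_ord_set l : uniq l -> all (fun k => k < n)%nat l -> #|ord_set l| = size l.
Proof. by move=> ul bl; rewrite -sum1_card (big_ord_set (fun=> 1%nat)) // sum1_size. Qed.

End OrdinalSets.

(* Partitions of {0, ..., k-1} are encoded by sending each element to the least
   member of its block. *)
Definition min_labelling (k : nat) (s : seq nat) : bool :=
  (size s == k) &&
  all (fun i => (nth 0 s i <= i)%nat && (nth 0 s (nth 0 s i) == nth 0 s i)) (iota 0 k).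

Fixpoint min_labellings (k : nat) : seq (seq nat) :=
  if k is k'.+1 then
    [seq rcons s x | s <- min_labellings k', x <- k' :: [seq r <- iota 0 k' | nth 0 s r == r]]
  else [:: [::]].

Lemma mem_min_labellings k s : min_labelling k s -> s \in min_labellings k.
Proof.
elim: k s => [|k IH] s /andP[/eqP size_s labelled]; first by case: s size_s labelled.
case/lastP: s size_s labelled => [//|s x]; rewrite size_rcons => -[size_s] labelled.
have nth_s i : (i < k)%nat -> nth 0 (rcons s x) i = nth 0 s i.
  by move=> ltik; rewrite nth_rcons size_s ltik.
have := allP labelled k; rewrite mem_iota ltnSn nth_rcons size_s ltnn eqxx => /(_ isT).
move=> /andP[lexk lab_x]; apply/allpairsPdep; exists s, x; split=> //.
  apply: IH; rewrite /min_labelling size_s eqxx; apply/allP => i.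
  rewrite mem_iota add0n => /andP[_ ltik].
  have := allP labelled i; rewrite mem_iota ltnS (ltnW ltik) nth_s // => /(_ isT) /andP[lei].
  by rewrite lei nth_s // (leq_ltn_trans lei ltik).
rewrite inE; case: ltngtP lexk => // ltxk _.
by rewrite mem_filter mem_iota ltxk -nth_s // lab_x orbT.
Qed.

Definition block (n : nat) (s : seq nat) (i : nat) : seq nat :=
  [seq j <- iota 0 n | nth 0 s j == nth 0 s i].

Lemma block_wf n s i : uniq (block n s i) && all (fun k => k < n) (block n s i).
Proof.
rewrite filter_uniq ?iota_uniq //; apply/allP => k.
by rewrite mem_filter mem_iota add0n => /and3P[].
Qed.

(* The empty target stands for leaving to a new singleton coalition. *)
Definition move_targets (n : nat) (s : seq nat) (i : nat) : seq (seq nat) :=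
  [::] :: [seq block n s c | c <- iota 0 n & nth 0 s c != nth 0 s i].

Lemma move_targets_wf n s i C :
  C \in move_targets n s i -> uniq C && all (fun k => k < n) C.
Proof. by rewrite inE => /predU1P[-> // | /mapP[c _ ->]]; apply: block_wf. Qed.

Section PartitionLabelling.
Variables (n : nat) (P : {set {set 'I_n}}).
Hypothesis Ppart : partition P [set: 'I_n].

Let trivP : trivIset P. Proof. by case/and3P: Ppart. Qed.
Let in_cover x : x \in cover P. Proof. by rewrite (cover_partition Ppart) inE. Qed.

Definition min_label (i : 'I_n) : 'I_n := [arg min_(j < i in pblock P i) val j].

Lemma min_labelP i :
  min_label i \in pblock P i /\ forall j, j \in pblock P i -> min_label i <= j.
Proof.
by rewrite /min_label; case: arg_minnP => [|j jin jmin]; rewrite ?mem_pblock.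
Qed.

Lemma eq_min_label i j : (min_label i == min_label j) = (j \in pblock P i).
Proof.
have [mi lei] := min_labelP i; have [mj lej] := min_labelP j.
rewrite -eq_pblock //; apply/eqP/eqP => [e | e].
  by rewrite -(same_pblock trivP mi) e (same_pblock trivP mj).
by apply/val_inj/eqP; rewrite eqn_leq lei ?e // lej -?e.
Qed.

Definition labelling : seq nat := [seq val (min_label j) | j <- enum 'I_n].

Lemma nth_labelling (i : 'I_n) : nth 0 labelling i = min_label i.
Proof. by rewrite (nth_map i) ?size_enum_ord // nth_ord_enum. Qed.

Lemma min_labelling_labelling : min_labelling n labelling.
Proof.
rewrite /min_labelling size_map size_enum_ord eqxx; apply/allP => k.
rewrite mem_iota add0n => /= ltkn; rewrite -[k]/(val (Ordinal ltkn)) !nth_labelling.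
have [mk lek] := min_labelP (Ordinal ltkn).
by rewrite lek ?mem_pblock // val_eqE eq_min_label (same_pblock trivP mk) mem_pblock in_cover.
Qed.

Lemma ord_set_block (i : 'I_n) : ord_set n (block n labelling i) = pblock P i.
Proof.
apply/setP => j; rewrite inE mem_filter mem_iota add0n ltn_ord leq0n !andbT.
by rewrite !nth_labelling val_eqE eq_sym eq_min_label.
Qed.

Lemma move_target_admissible (i : 'I_n) C : C \in move_targets n labelling i ->
  val i \notin C /\ ((ord_set n C \in P /\ ord_set n C != pblock P i) \/ ord_set n C = set0).
Proof.
rewrite inE => /predU1P[-> | /mapP[c]].
  by split=> //; right; apply/setP => j; rewrite !inE.
rewrite mem_filter mem_iota add0n => /andP[lab_c /andP[_ ltcn]] ->.
have iNc : val i \notin block n labelling c by rewrite mem_filter eq_sym (negbTE lab_c).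
split=> //; left; rewrite -[c]/(val (Ordinal ltcn)) ord_set_block.
split; first exact: pblock_mem.
apply: contraNneq iNc => e; have := mem_pblock P i.
by rewrite in_cover -e -ord_set_block inE.
Qed.

End PartitionLabelling.

Section Checker.
Variables (n : nat) (weight : nat -> nat -> Z).

Definition weight_sum (i : nat) (l : seq nat) : Z :=
  foldr (fun j acc => weight i j + acc)%Z 0%Z l.

Definition IS_move (s : seq nat) (i : nat) (C : seq nat) : bool :=
  let B := block n s i in let D := i :: C in
  (weight_sum i B * Z.of_nat (size D) <? weight_sum i D * Z.of_nat (size B))%Z &&
  all (fun j => weight_sum j C * Z.of_nat (size D) <=? weight_sum j D * Z.of_nat (size C))%Z C.

Definition has_IS_move (s : seq nat) : bool :=
  has (fun i => has (IS_move s i) (move_targets n s i)) (iota 0 n).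

End Checker.

Section Soundness.
Variables (R : realType) (n : nat) (weight : nat -> nat -> Z).
Local Open Scope ring_scope.

Definition Zgame (i j : 'I_n) : R := (int_of_Z (weight i j))%:~R.

Lemma fhg_util_ord_set (i : 'I_n) l : uniq l -> all (fun k => k < n)%nat l ->
  fhg_util Zgame i (ord_set n l) = (int_of_Z (weight_sum weight i l))%:~R / (size l)%:R.
Proof.
move=> ul bl; rewrite /fhg_util card_ord_set //; congr (_ / _).
rewrite (big_ord_set (fun k => (int_of_Z (weight i k))%:~R : R)) //.
by elim: l {ul bl} => [|k l IH]; rewrite ?big_nil ?big_cons ?IH //= raddfD intrD.
Qed.

Lemma IS_deviation_of_move P (i : 'I_n) C :
  partition P [set: 'I_n] -> C \in move_targets n (labelling P) i ->
  IS_move n weight (labelling P) i C -> IS_deviation Zgame P i (ord_set n C).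
Proof.
move=> Ppart Ctarget /andP[gain /allP accept].
have /andP[uC bC] := move_targets_wf Ctarget.
have /andP[uB bB] := block_wf n (labelling P) i.
have iB : val i \in block n (labelling P) i by rewrite mem_filter eqxx mem_iota ltn_ord.
have [iC target] := move_target_admissible Ppart Ctarget.
have iCE : i |: ord_set n C = ord_set n (val i :: C) by rewrite ord_set_cons.
have uiC : uniq (val i :: C) by rewrite /= iC uC.
have biC : all (fun k => k < n)%nat (val i :: C) by rewrite /= ltn_ord bC.
apply: IS_deviation_intro => //.
  rewrite -(ord_set_block Ppart) iCE !fhg_util_ord_set // ltr_Z_frac //.
  by case: (block _ _ _) iB.
move=> j jC; have jC' : val j \in C by move: jC; rewrite inE.
by rewrite iCE !fhg_util_ord_set // ler_Z_frac ?accept //; case: (C) jC'.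
Qed.

Lemma no_IS_partition_of_certificate :
  all (has_IS_move n weight) (min_labellings n) -> forall P, ~ individually_stable Zgame P.
Proof.
move=> cert P [Ppart stable]; apply: stable.
have /hasP[i] := allP cert _ (mem_min_labellings (min_labelling_labelling Ppart)).
rewrite mem_iota add0n => /andP[_ ltin] /hasP[C Ctarget dev].
by exists (Ordinal ltin), (ord_set n C); apply: IS_deviation_of_move.
Qed.

End Soundness.

Definition counterexample_weight (i j : nat) : Z :=
  if i == j then 0%Z else
  match minn i j, maxn i j with
  | 0, 1 => 22%Z | 0, 2 => 36%Z | 0, 3 => 34%Z | 0, 5 => 18%Z
  | 1, 3 => 18%Z | 1, 4 => 18%Z | 2, 5 => 18%Z | 2, 6 => 34%Z
  | 3, 4 => 36%Z | 4, 6 => 37%Z | 5, 6 => 23%Z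
  | _, _ => (-1000)%Z
  end.

Lemma counterexample_weight_sym i j : counterexample_weight i j = counterexample_weight j i.
Proof. by rewrite /counterexample_weight eq_sym minnC maxnC. Qed.

Lemma counterexample_certificate : all (has_IS_move 7 counterexample_weight) (min_labellings 7).
Proof. by vm_compute. Qed.

Theorem theorem5p1 (R : realType) :
  exists (n : nat) (v : 'I_n -> 'I_n -> R),
    fhg_valid v /\ fhg_symmetric v /\
    forall P : {set {set 'I_n}}, ~ individually_stable v P.
Proof.
exists 7, (Zgame R counterexample_weight); split; [|split].
- by move=> i; rewrite /Zgame /counterexample_weight eqxx.
- by move=> i j; rewrite /Zgame counterexample_weight_sym.
- exact: no_IS_partition_of_certificate counterexample_certificate.
Qed.
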